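(* Let $A$ be an observable on $\mathbb C^d$ with orthonormal eigenbasis $\{\varphi_k\}_{k=0}^{d-1}$. For all unit vectors $\Phi,\Psi\in\mathbb C^d$, $$d(T_{A\Phi}\Psi,\Psi)\le d(\Psi,\Phi).$$
   Context: $\mathcal H=\mathbb C^d$ with the standard inner product; states are unit vectors. An observable $A$ is non-degenerate and identified with its orthonormal eigenbasis $\{\varphi_k\}_{k=0}^{d-1}$. Bures metric: $d(\Phi,\Psi)=\sqrt{2-2|\langle\Phi,\Psi\rangle|}$. Physical imposition operator: for a unit vector $\Phi$ (the generator state), $T_{A\Phi}\Psi=\sum_{k=0}^{d-1}|\langle\varphi_k,\Phi\rangle|\,u_k(\Psi)\,\varphi_k$, where $u_k(\Psi)=\langle\varphi_k,\Psi\rangle/|\langle\varphi_k,\Psi\rangle|$ if $\langle\varphi_k,\Psi\rangle\ne0$ and $u_k(\Psi)=1$ otherwise. Note $T_{A\Phi}\Psi$ is again a unit vector. *)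

(* The complex field C^d is modelled over an arbitrary
   numClosedFieldType C (the complex numbers are an instance). *)
From HB Require Import structures.
From mathcomp Require Import all_boot all_order all_algebra.
Set Implicit Arguments. Unset Strict Implicit. Unset Printing Implicit Defensive.
Import Order.TTheory GRing.Theory Num.Theory.
Local Open Scope ring_scope.

Definition inner (C : numClosedFieldType) (d : nat) (x y : 'cV[C]_d) : C :=
  \sum_(i < d) (x i 0)^* * y i 0.

Definition unit_vec (C : numClosedFieldType) (d : nat) (x : 'cV[C]_d) : Prop :=
  inner x x = 1.

(* An orthonormal family of d vectors in C^d (= an orthonormal eigenbasis
   identifying a non-degenerate observable A). *)
Definition onb (C : numClosedFieldType) (d : nat)
  (phi : 'I_d -> 'cV[C]_d) : Prop :=
  forall j k : 'I_d, inner (phi j) (phi k) = (j == k)%:R.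

Definition bures (C : numClosedFieldType) (d : nat) (x y : 'cV[C]_d) : C :=
  sqrtC (2 - 2 * `|inner x y|).

Definition phase (C : numClosedFieldType) (c : C) : C :=
  if c != 0 then c / `|c| else 1.

Definition imposition (C : numClosedFieldType) (d : nat)
  (phi : 'I_d -> 'cV[C]_d) (Phi Psi : 'cV[C]_d) : 'cV[C]_d :=
  \sum_(k < d) (`|inner (phi k) Phi| * phase (inner (phi k) Psi)) *: phi k.

From HB Require Import structures.
From mathcomp Require Import all_boot all_order all_algebra.
Import Order.TTheory GRing.Theory Num.Theory.
Set Implicit Arguments. Unset Strict Implicit. Unset Printing Implicit Defensive.
Local Open Scope ring_scope.

(* Write a_k = <phi_k, Phi>, b_k = <phi_k, Psi> and call
   S = sum_k |a_k| |b_k| the overlap of Phi and Psi in the basis phi.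
   1. Since phi is an orthonormal basis of C^d it is also complete, which
      gives Parseval's identity <x, y> = sum_k conj <phi_k, x> <phi_k, y>.
   2. The imposition operator aligns the phases of Psi's coefficients, so
      <T Psi, Psi> = S exactly (lemma [inner_imposition]).
   3. By Parseval and the triangle inequality |<Psi, Phi>| <= S, and by
      Parseval and the AM-GM inequality S <= 1 for unit vectors.
   4. Hence 0 <= 2 - 2S <= 2 - 2|<Psi, Phi>|, and monotonicity of the square
      root gives the claim. *)

Section OrthonormalBasis.
Variables (C : numClosedFieldType) (d : nat) (phi : 'I_d -> 'cV[C]_d).
Hypothesis phi_onb : onb phi.

(* Completeness relation sum_k |phi_k><phi_k| = 1: the matrix with columns
   phi_k has a left inverse (its adjoint), hence it is also a right one. *)
Lemma onb_complete (i j : 'I_d) :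
  \sum_(k < d) phi k i 0 * (phi k j 0)^* = (i == j)%:R.
Proof.
pose U : 'M[C]_d := \matrix_(i, k) phi k i 0.
pose V : 'M[C]_d := \matrix_(k, j) (phi k j 0)^*.
have VU1 : V *m U = 1%:M.
  apply/matrixP => k l; rewrite !mxE -phi_onb /inner.
  by apply: eq_bigr => m _; rewrite !mxE.
have /matrixP /(_ i j) := mulmx1C VU1; rewrite !mxE => <-.
by apply: eq_bigr => m _; rewrite !mxE.
Qed.

Lemma parseval (x y : 'cV[C]_d) :
  inner x y = \sum_(k < d) (inner (phi k) x)^* * inner (phi k) y.
Proof.
have expand_inner : inner x y = \sum_(i < d) \sum_(j < d)
    (x i 0)^* * y j 0 * \sum_(k < d) phi k i 0 * (phi k j 0)^*.
  apply: eq_bigr => i _; rewrite (bigD1 i) //= onb_complete eqxx mulr1.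
  rewrite big1 ?addr0 // => j /negbTE ji.
  by rewrite onb_complete eq_sym ji mulr0.
rewrite expand_inner; symmetry.
under eq_bigr => k _ do rewrite rmorph_sum big_distrl /=.
rewrite exchange_big /=; apply: eq_bigr => i _.
under eq_bigr => k _ do rewrite big_distrr /=.
rewrite exchange_big /=; apply: eq_bigr => j _.
rewrite big_distrr /=; apply: eq_bigr => k _.
by rewrite rmorphM /= conjCK mulrACA mulrC.
Qed.

Lemma unit_vec_coef_norm (x : 'cV[C]_d) :
  unit_vec x -> \sum_(k < d) `|inner (phi k) x| ^+ 2 = 1.
Proof.
move=> <-; rewrite (parseval x x).
by apply: eq_bigr => k _; rewrite normCKC.
Qed.

End OrthonormalBasis.

Definition overlap (C : numClosedFieldType) (d : nat)
  (phi : 'I_d -> 'cV[C]_d) (x y : 'cV[C]_d) : C :=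
  \sum_(k < d) `|inner (phi k) x| * `|inner (phi k) y|.

Lemma overlap_ge0 (C : numClosedFieldType) (d : nat)
  (phi : 'I_d -> 'cV[C]_d) (x y : 'cV[C]_d) : 0 <= overlap phi x y.
Proof. by apply: sumr_ge0 => k _; rewrite mulr_ge0. Qed.

Lemma overlapC (C : numClosedFieldType) (d : nat)
  (phi : 'I_d -> 'cV[C]_d) (x y : 'cV[C]_d) : overlap phi x y = overlap phi y x.
Proof. by apply: eq_bigr => k _; rewrite mulrC. Qed.

(* The overlap dominates the modulus of the inner product (triangle
   inequality applied to Parseval's identity). *)
Lemma norm_inner_le_overlap (C : numClosedFieldType) (d : nat)
  (phi : 'I_d -> 'cV[C]_d) (x y : 'cV[C]_d) :
  onb phi -> `|inner x y| <= overlap phi x y.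
Proof.
move=> phi_onb; rewrite (parseval phi_onb) /overlap.
under [X in _ <= X]eq_bigr do rewrite -norm_conjC -normrM.
exact: ler_norm_sum.
Qed.

(* The overlap of two unit vectors is at most one (AM-GM termwise). *)
Lemma overlap_le1 (C : numClosedFieldType) (d : nat)
  (phi : 'I_d -> 'cV[C]_d) (x y : 'cV[C]_d) :
  onb phi -> unit_vec x -> unit_vec y -> overlap phi x y <= 1.
Proof.
move=> phi_onb ux uy.
have amgm : overlap phi x y <=
    \sum_(k < d) (`|inner (phi k) x| ^+ 2 + `|inner (phi k) y| ^+ 2) / 2.
  apply: ler_sum => k _.
  by rewrite (real_leif_mean_square (normr_real _) (normr_real _)).
apply: le_trans amgm _.
rewrite -mulr_suml big_split /= !unit_vec_coef_norm // mulfV //.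
by rewrite -[1 + 1]/(2%:R) pnatr_eq0.
Qed.

Lemma phase_conjM (C : numClosedFieldType) (b : C) : (phase b)^* * b = `|b|.
Proof.
rewrite /phase; case: eqP => [-> | /eqP b_neq0] /=; first by rewrite mulr0 normr0.
rewrite rmorphM /= fmorphV /= [`|b|^*]geC0_conj //.
by rewrite mulrAC -normCKC expr2 mulfK // normr_eq0.
Qed.

(* Imposition aligns phases, so <T_{A Phi} Psi, Psi> is the overlap. *)
Lemma inner_imposition (C : numClosedFieldType) (d : nat)
  (phi : 'I_d -> 'cV[C]_d) (Phi Psi : 'cV[C]_d) :
  inner (imposition phi Phi Psi) Psi = overlap phi Phi Psi.
Proof.
rewrite /inner /imposition.
transitivity (\sum_(i < d) \sum_(k < d)
    (`|inner (phi k) Phi| * phase (inner (phi k) Psi))^* *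
    ((phi k i 0)^* * Psi i 0)).
  apply: eq_bigr => i _; rewrite summxE rmorph_sum /= big_distrl /=.
  by apply: eq_bigr => k _; rewrite mxE rmorphM /= mulrA.
rewrite exchange_big /=; apply: eq_bigr => k _.
rewrite -big_distrr /= -/(inner (phi k) Psi) rmorphM /= geC0_conj //.
by rewrite -mulrA phase_conjM.
Qed.

Lemma sqrt_two_sub_le (C : numClosedFieldType) (s t : C) :
  0 <= s -> s <= t -> t <= 1 -> sqrtC (2 - 2 * t) <= sqrtC (2 - 2 * s).
Proof.
move=> s_ge0 st t_le1.
have two_sub_ge0 u : u <= 1 -> 0 <= 2 - 2 * u.
  by move=> u_le1; rewrite subr_ge0 -[2 in X in _ <= X]mulr1 ler_pM2l ?ltr0n.
rewrite ler_sqrtC ?qualifE /= ?two_sub_ge0 ?(le_trans st) //.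
by rewrite lerD2l lerN2 ler_pM2l ?ltr0n.
Qed.

Theorem proposition2 (C : numClosedFieldType) (d : nat)
  (phi : 'I_d -> 'cV[C]_d) (Hphi : onb phi)
  (Phi Psi : 'cV[C]_d) (HPhi : unit_vec Phi) (HPsi : unit_vec Psi) :
  bures (imposition phi Phi Psi) Psi <= bures Psi Phi.
Proof.
rewrite /bures inner_imposition ger0_norm ?overlap_ge0 //.
apply: sqrt_two_sub_le; first exact: normr_ge0.
- by rewrite overlapC norm_inner_le_overlap.
- exact: overlap_le1.
Qed.
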